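(* Let $k\ge1$ and let $(A,t)$ be a nontrivial $\mathcal{C}_k$-algebra. The following are equivalent: (i) $(A,t)$ is a simple algebra; (ii) for every $a\in A$ with $a\neq1$, $\bigwedge_{j=1}^{k}t^j(\triangle a)=0$; (iii) $K(A)=\{0,1\}$, where $K(A)=\{x\in A: t(x)=x=\nabla x\}$.
   Context: A modal pseudocomplemented De Morgan algebra ($mpM$-algebra) is an algebra $\langle A,\wedge,\vee,\sim,{}^\ast,0,1\rangle$ such that $\langle A,\wedge,\vee,\sim,0,1\rangle$ is a De Morgan algebra (bounded distributive lattice with $\sim\sim x=x$, $\sim(x\vee y)=\sim x\wedge\sim y$), $x^\ast$ is the pseudocomplement of $x$, and $x\vee\sim x\le x\vee x^\ast$. Put $\nabla x=\sim(\sim x\wedge x^\ast)$, $\triangle x=\sim\nabla\sim x$. A $\mathcal{C}_k$-algebra ($k\ge1$) is a pair $(A,t)$ with $A$ an $mpM$-algebra and $t$ an $mpM$-automorphism of $A$ with $t^k=\mathrm{id}$; simplicity refers to the signature $(\wedge,\vee,\sim,{}^\ast,t,0,1)$. *)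

From Stdlib Require Import Arith.

Set Implicit Arguments.

Record mpM_sig := MpMSig {
  car :> Type;
  meet : car -> car -> car;
  join : car -> car -> car;
  neg  : car -> car;
  star : car -> car;
  zero : car;
  one  : car
}.

Section Defs.
Variable A : mpM_sig.

Definition le (x y : A) : Prop := meet A x y = x.

Definition is_bdl : Prop :=
  (forall x y z, meet A x (meet A y z) = meet A (meet A x y) z) /\
  (forall x y z, join A x (join A y z) = join A (join A x y) z) /\
  (forall x y, meet A x y = meet A y x) /\
  (forall x y, join A x y = join A y x) /\
  (forall x y, meet A x (join A x y) = x) /\
  (forall x y, join A x (meet A x y) = x) /\
  (forall x y z, meet A x (join A y z) = join A (meet A x y) (meet A x z)) /\
  (forall x, join A x (zero A) = x) /\
  (forall x, meet A x (one A) = x).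

Definition is_DeMorgan : Prop :=
  is_bdl /\
  (forall x, neg A (neg A x) = x) /\
  (forall x y, neg A (join A x y) = meet A (neg A x) (neg A y)).

Definition is_pseudocomplement : Prop :=
  forall x y, meet A x y = zero A <-> le y (star A x).

Definition is_mpM : Prop :=
  is_DeMorgan /\ is_pseudocomplement /\
  (forall x, le (join A x (neg A x)) (join A x (star A x))).

Definition nabla (x : A) : A := neg A (meet A (neg A x) (star A x)).
Definition triangle (x : A) : A := neg A (nabla (neg A x)).

Definition is_mpM_automorphism (t : A -> A) : Prop :=
  (forall x y, t x = t y -> x = y) /\ (forall y, exists x, t x = y) /\
  (forall x y, t (meet A x y) = meet A (t x) (t y)) /\
  (forall x y, t (join A x y) = join A (t x) (t y)) /\
  (forall x, t (neg A x) = neg A (t x)) /\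
  (forall x, t (star A x) = star A (t x)) /\
  t (zero A) = zero A /\ t (one A) = one A.

Definition is_Ck (k : nat) (t : A -> A) : Prop :=
  is_mpM /\ is_mpM_automorphism t /\ (forall x, Nat.iter k t x = x).

Definition nontrivial : Prop := exists x y : A, x <> y.

Definition is_congruence (t : A -> A) (R : A -> A -> Prop) : Prop :=
  (forall x, R x x) /\ (forall x y, R x y -> R y x) /\
  (forall x y z, R x y -> R y z -> R x z) /\
  (forall x x' y y', R x x' -> R y y' -> R (meet A x y) (meet A x' y')) /\
  (forall x x' y y', R x x' -> R y y' -> R (join A x y) (join A x' y')) /\
  (forall x x', R x x' -> R (neg A x) (neg A x')) /\
  (forall x x', R x x' -> R (star A x) (star A x')) /\
  (forall x x', R x x' -> R (t x) (t x')).

Definition simple (t : A -> A) : Prop :=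
  nontrivial /\
  forall R, is_congruence t R ->
    (forall x y, R x y -> x = y) \/ (forall x y, R x y).

Fixpoint bigmeet_iter (t : A -> A) (n : nat) (a : A) : A :=
  match n with
  | O => one A
  | S m => meet A (bigmeet_iter t m a) (Nat.iter (S m) t a)
  end.

Definition inK (t : A -> A) (x : A) : Prop := t x = x /\ x = nabla x.

End Defs.

(* Call x Boolean when x ⊓ ∼x = ⊥.  In an mpM-algebra every ∇x and every Δx
   is Boolean, Boolean elements are fixed by ∇, and an element is determined
   (among elements above a fixed x) by its values under ∇ and Δ.  Hence
   K(A) = {x : t x = x = ∇x} consists of the t-fixed Boolean elements, and
   for every a the element  B(a) = ⋀_{j=1..k} t^j(Δa)  lies in K(A), with
   B(a) = 1 only if a = 1.  The three implications are then:
   - (i) ⇒ (iii): each x ∈ K(A) yields the congruence  u ≡ v :⇔ u ⊓ x = v ⊓ x,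
     which is the identity iff x = 1 and total iff x = 0;
   - (iii) ⇒ (ii): B(a) ∈ K(A) and B(a) ≠ 1 when a ≠ 1;
   - (ii) ⇒ (i): a congruence identifying a ≠ b identifies some c ≠ 1 with 1
     (by the determination principle), hence B(c) = 0 with B(1) = 1.
   The lemmas are developed in one section whose hypotheses (lattice, De
   Morgan, pseudocomplement and mpM axioms, then the automorphism and its
   period) are introduced in that order, so each lemma only depends on the
   axioms it actually uses. *)

From Stdlib Require Import Arith Lia Classical.

Section MpMAlgebra.
Variable A : mpM_sig.

Local Notation "x ⊓ y" := (meet A x y) (at level 40, left associativity).
Local Notation "x ⊔ y" := (join A x y) (at level 50, left associativity).
Local Notation "x ≤ y" := (le A x y) (at level 70, no associativity).
Local Notation "∼ x" := (neg A x) (at level 35, right associativity).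
Local Notation "x ^*" := (star A x) (at level 30).
Local Notation "⊥" := (zero A).
Local Notation "⊤" := (one A).
Local Notation "∇ x" := (nabla A x) (at level 35, right associativity).
Local Notation "'Δ' x" := (triangle A x) (at level 35, right associativity).

(** * Bounded distributive lattices *)

Hypothesis bdl : is_bdl A.

Lemma meet_assoc x y z : x ⊓ (y ⊓ z) = x ⊓ y ⊓ z.
Proof. destruct bdl as (H & _). apply H. Qed.
Lemma meet_comm x y : x ⊓ y = y ⊓ x.
Proof. destruct bdl as (_ & _ & H & _). apply H. Qed.
Lemma join_comm x y : x ⊔ y = y ⊔ x.
Proof. destruct bdl as (_ & _ & _ & H & _). apply H. Qed.
Lemma meet_join_absorb x y : x ⊓ (x ⊔ y) = x.
Proof. destruct bdl as (_ & _ & _ & _ & H & _). apply H. Qed.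
Lemma join_meet_absorb x y : x ⊔ x ⊓ y = x.
Proof. destruct bdl as (_ & _ & _ & _ & _ & H & _). apply H. Qed.
Lemma meet_join_distr x y z : x ⊓ (y ⊔ z) = x ⊓ y ⊔ x ⊓ z.
Proof. destruct bdl as (_ & _ & _ & _ & _ & _ & H & _). apply H. Qed.
Lemma join_bot x : x ⊔ ⊥ = x.
Proof. destruct bdl as (_ & _ & _ & _ & _ & _ & _ & H & _). apply H. Qed.
Lemma meet_top x : x ⊓ ⊤ = x.
Proof. destruct bdl as (_ & _ & _ & _ & _ & _ & _ & _ & H). apply H. Qed.

Lemma meet_idem x : x ⊓ x = x.
Proof. rewrite <- (join_meet_absorb x x) at 2. apply meet_join_absorb. Qed.

Lemma le_iff_join x y : x ≤ y <-> x ⊔ y = y.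
Proof.
  unfold le; split; intro H.
  - rewrite <- H, meet_comm, join_comm. apply join_meet_absorb.
  - rewrite <- H. apply meet_join_absorb.
Qed.

Lemma le_refl x : x ≤ x.
Proof. apply meet_idem. Qed.
Lemma le_trans x y z : x ≤ y -> y ≤ z -> x ≤ z.
Proof. unfold le; intros Hxy Hyz. rewrite <- Hxy, <- meet_assoc, Hyz. reflexivity. Qed.
Lemma le_antisym x y : x ≤ y -> y ≤ x -> x = y.
Proof. unfold le; intros Hxy Hyx. rewrite <- Hxy, meet_comm. exact Hyx. Qed.

Lemma meet_lb_l x y : x ⊓ y ≤ x.
Proof. unfold le. rewrite (meet_comm x y), <- meet_assoc, meet_idem. reflexivity. Qed.
Lemma meet_lb_r x y : x ⊓ y ≤ y.
Proof. unfold le. rewrite <- meet_assoc, meet_idem. reflexivity. Qed.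
Lemma meet_glb x y z : z ≤ x -> z ≤ y -> z ≤ x ⊓ y.
Proof. unfold le; intros Hx Hy. rewrite meet_assoc, Hx. exact Hy. Qed.
Lemma le_meet_iff z x y : z ≤ x ⊓ y <-> z ≤ x /\ z ≤ y.
Proof.
  split.
  - intro H; split; eapply le_trans; eauto using meet_lb_l, meet_lb_r.
  - intros [Hx Hy]. apply meet_glb; assumption.
Qed.
Lemma meet_mono_l x y z : x ≤ y -> x ⊓ z ≤ y ⊓ z.
Proof.
  intro H. apply meet_glb; [|apply meet_lb_r].
  eapply le_trans; [apply meet_lb_l | exact H].
Qed.

Lemma join_ub_l x y : x ≤ x ⊔ y.
Proof. apply meet_join_absorb. Qed.
Lemma join_ub_r x y : y ≤ x ⊔ y.
Proof. rewrite join_comm. apply meet_join_absorb. Qed.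
Lemma join_lub x y z : x ≤ z -> y ≤ z -> x ⊔ y ≤ z.
Proof.
  rewrite !le_iff_join; intros Hx Hy.
  destruct bdl as (_ & join_assoc & _). rewrite <- join_assoc, Hy. exact Hx.
Qed.

Lemma bot_le x : ⊥ ≤ x.
Proof. apply le_iff_join. rewrite join_comm. apply join_bot. Qed.
Lemma le_top x : x ≤ ⊤.
Proof. apply meet_top. Qed.
Lemma le_bot_eq x : x ≤ ⊥ -> x = ⊥.
Proof. intro H. apply le_antisym; auto using bot_le. Qed.
Lemma top_le_eq x : ⊤ ≤ x -> x = ⊤.
Proof. intro H. apply le_antisym; auto using le_top. Qed.
Lemma meet_bot x : x ⊓ ⊥ = ⊥.
Proof. rewrite meet_comm. apply bot_le. Qed.
Lemma meet_top_l x : ⊤ ⊓ x = x.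
Proof. rewrite meet_comm. apply meet_top. Qed.
Lemma meet_eq_top x y : x ⊓ y = ⊤ -> x = ⊤ /\ y = ⊤.
Proof.
  intro H. split; apply top_le_eq; rewrite <- H; auto using meet_lb_l, meet_lb_r.
Qed.

Lemma le_by_cases z a b c : z ≤ a ⊔ b -> z ⊓ a ≤ c -> z ⊓ b ≤ c -> z ≤ c.
Proof.
  intros Hz Ha Hb. unfold le in Hz.
  rewrite <- Hz, meet_join_distr. apply join_lub; assumption.
Qed.

Lemma meet_eq_join a b : a ⊓ b = a ⊔ b -> a = b.
Proof.
  intro E. apply le_antisym.
  - apply le_trans with (a ⊔ b); [apply join_ub_l|]. rewrite <- E. apply meet_lb_r.
  - apply le_trans with (a ⊔ b); [apply join_ub_r|]. rewrite <- E. apply meet_lb_l.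
Qed.

Lemma bigmeet_le_iff (t : A -> A) n b y :
  y ≤ bigmeet_iter A t n b <-> (forall j, 1 <= j <= n -> y ≤ Nat.iter j t b).
Proof.
  induction n as [|n IH]; simpl.
  - split; intros; [lia | apply le_top].
  - rewrite le_meet_iff, IH. split.
    + intros [Hlow Hlast] j Hj.
      destruct (Nat.eq_dec j (S n)) as [->|]; [exact Hlast | apply Hlow; lia].
    + intro H. split; [intros; apply H; lia | apply (H (S n)); lia].
Qed.

Lemma bigmeet_le (t : A -> A) n b j :
  1 <= j <= n -> bigmeet_iter A t n b ≤ Nat.iter j t b.
Proof. intro Hj. eapply bigmeet_le_iff; eauto. apply le_refl. Qed.

(** * De Morgan negation *)

Hypothesis neg_invol : forall x, ∼ ∼ x = x.
Hypothesis neg_join : forall x y, ∼ (x ⊔ y) = ∼ x ⊓ ∼ y.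

Lemma neg_meet x y : ∼ (x ⊓ y) = ∼ x ⊔ ∼ y.
Proof. rewrite <- (neg_invol (∼ x ⊔ ∼ y)), neg_join, !neg_invol. reflexivity. Qed.

Lemma neg_antitone x y : x ≤ y -> ∼ y ≤ ∼ x.
Proof.
  intro H. apply le_iff_join in H.
  rewrite <- H, neg_join. apply meet_lb_l.
Qed.

Lemma neg_bot : ∼ ⊥ = ⊤.
Proof. apply top_le_eq. rewrite <- (neg_invol ⊤). apply neg_antitone, bot_le. Qed.
Lemma neg_top : ∼ ⊤ = ⊥.
Proof. rewrite <- neg_bot, neg_invol. reflexivity. Qed.

Definition boolean (x : A) : Prop := x ⊓ ∼ x = ⊥.

Lemma boolean_top : boolean ⊤.
Proof. unfold boolean. rewrite neg_top. apply meet_bot. Qed.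
Lemma boolean_bot : boolean ⊥.
Proof. unfold boolean. rewrite neg_bot. apply meet_top. Qed.
Lemma boolean_neg x : boolean x -> boolean (∼ x).
Proof. unfold boolean. rewrite neg_invol, meet_comm. auto. Qed.

Lemma boolean_meet x y : boolean x -> boolean y -> boolean (x ⊓ y).
Proof.
  unfold boolean; intros Hx Hy. apply le_bot_eq.
  rewrite neg_meet. apply (le_by_cases _ (∼ x) (∼ y)); [apply meet_lb_r| |].
  - rewrite <- Hx. apply meet_glb; [|apply meet_lb_r].
    apply le_trans with (x ⊓ y); [|apply meet_lb_l].
    eapply le_trans; apply meet_lb_l.
  - rewrite <- Hy. apply meet_glb; [|apply meet_lb_r].
    apply le_trans with (x ⊓ y); [|apply meet_lb_r].
    eapply le_trans; apply meet_lb_l.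
Qed.

Lemma boolean_join_neg u : boolean u -> u ⊔ ∼ u = ⊤.
Proof.
  intro H. rewrite <- (neg_invol u) at 1.
  rewrite <- neg_meet, meet_comm, H. apply neg_bot.
Qed.

Lemma boolean_le u v : boolean u -> v ⊔ ∼ u = ⊤ -> u ≤ v.
Proof.
  unfold boolean; intros Hu Hv. unfold le.
  rewrite <- (meet_top u) at 2. rewrite <- Hv, meet_join_distr, Hu, join_bot.
  reflexivity.
Qed.

(** * Pseudocomplements *)

Hypothesis pseudo : is_pseudocomplement A.

Lemma meet_star x : x ⊓ x ^* = ⊥.
Proof. apply pseudo, le_refl. Qed.

Lemma star_antitone x y : x ≤ y -> y ^* ≤ x ^*.
Proof.
  intro H. apply pseudo, le_bot_eq.
  eapply le_trans; [apply meet_mono_l, H|]. rewrite meet_star. apply le_refl.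
Qed.

Lemma star_bot : ⊥ ^* = ⊤.
Proof. apply top_le_eq, pseudo, meet_top. Qed.

Lemma star_meet_rel u x : (u ⊓ x) ^* ⊓ x = u ^* ⊓ x.
Proof.
  apply le_antisym.
  - apply meet_glb; [|apply meet_lb_r]. apply pseudo, le_bot_eq.
    rewrite <- (meet_star (u ⊓ x)). apply meet_glb.
    + apply meet_glb; [apply meet_lb_l|].
      eapply le_trans; apply meet_lb_r.
    + eapply le_trans; [apply meet_lb_r | apply meet_lb_l].
  - apply meet_glb; [|apply meet_lb_r].
    eapply le_trans; [apply meet_lb_l | apply star_antitone, meet_lb_l].
Qed.

(** * Modal pseudocomplemented De Morgan algebras *)

Hypothesis mpM_axiom : forall x, x ⊔ ∼ x ≤ x ⊔ x ^*.

(* The dual form of the mpM axiom. *)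
Lemma mpM_axiom_dual y : ∼ y ⊓ ∼ (y ^*) ≤ y.
Proof.
  eapply le_trans; [rewrite <- neg_join; apply neg_antitone, mpM_axiom|].
  rewrite neg_join, neg_invol. apply meet_lb_r.
Qed.

Lemma nabla_eq x : ∇ x = x ⊔ ∼ (x ^*).
Proof. unfold nabla. rewrite neg_meet, neg_invol. reflexivity. Qed.
Lemma neg_nabla_eq x : ∼ ∇ x = ∼ x ⊓ x ^*.
Proof. unfold nabla. apply neg_invol. Qed.
Lemma triangle_eq x : Δ x = x ⊓ (∼ x) ^*.
Proof. unfold triangle, nabla. rewrite !neg_invol. reflexivity. Qed.

Lemma le_nabla x : x ≤ ∇ x.
Proof. rewrite nabla_eq. apply join_ub_l. Qed.
Lemma triangle_le x : Δ x ≤ x.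
Proof. rewrite triangle_eq. apply meet_lb_l. Qed.

(* ∇y is always Boolean; this is where the mpM axiom enters. *)
Lemma boolean_nabla y : boolean (∇ y).
Proof.
  unfold boolean. apply le_bot_eq. rewrite <- (meet_star y).
  rewrite neg_nabla_eq.
  apply (le_by_cases _ y (∼ (y ^*))); [rewrite <- nabla_eq; apply meet_lb_l| |].
  - apply meet_glb; [apply meet_lb_r|].
    eapply le_trans; [apply meet_lb_l|]. eapply le_trans; apply meet_lb_r.
  - apply meet_glb.
    + eapply le_trans; [|apply mpM_axiom_dual]. apply meet_glb.
      * eapply le_trans; [apply meet_lb_l|].
        eapply le_trans; [apply meet_lb_r | apply meet_lb_l].
      * apply meet_lb_r.
    + eapply le_trans; [apply meet_lb_l|]. eapply le_trans; apply meet_lb_r.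
Qed.

Lemma boolean_triangle a : boolean (Δ a).
Proof. apply boolean_neg, boolean_nabla. Qed.

Lemma nabla_boolean x : boolean x -> ∇ x = x.
Proof.
  intro H. rewrite nabla_eq, join_comm. apply le_iff_join.
  rewrite <- (neg_invol x) at 2. apply neg_antitone, pseudo. exact H.
Qed.

Lemma triangle_top : Δ ⊤ = ⊤.
Proof. rewrite triangle_eq, neg_top, star_bot. apply meet_top. Qed.

Lemma determination x y : x ≤ y -> ∇ y ≤ ∇ x -> Δ y ≤ Δ x -> y ≤ x.
Proof.
  intros Hxy Hnabla Htri.
  assert (Hy : y ≤ x ⊔ ∼ (x ^*)).
  { rewrite <- nabla_eq. eapply le_trans; [apply le_nabla | exact Hnabla]. }
  apply (le_by_cases _ _ _ _ Hy); [apply meet_lb_r|].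
  assert (Hy' : y ⊓ ∼ (x ^*) ≤ ∼ y ⊔ (∼ y) ^*).
  { eapply le_trans; [apply meet_lb_l|]. eapply le_trans; [|apply mpM_axiom].
    rewrite neg_invol. apply join_ub_r. }
  apply (le_by_cases _ _ _ _ Hy').
  - eapply le_trans; [|apply mpM_axiom_dual]. apply meet_glb.
    + eapply le_trans; [apply meet_lb_r | apply neg_antitone, Hxy].
    + eapply le_trans; [apply meet_lb_l | apply meet_lb_r].
  - eapply le_trans; [|apply triangle_le]. eapply le_trans; [|exact Htri].
    rewrite triangle_eq. apply meet_glb; [|apply meet_lb_r].
    eapply le_trans; apply meet_lb_l.
Qed.

(** * The automorphism t *)

Variable t : A -> A.
Hypothesis aut : is_mpM_automorphism A t.

Lemma t_meet x y : t (x ⊓ y) = t x ⊓ t y.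
Proof. destruct aut as (_ & _ & H & _). apply H. Qed.
Lemma t_neg x : t (∼ x) = ∼ t x.
Proof. destruct aut as (_ & _ & _ & _ & H & _). apply H. Qed.
Lemma t_bot : t ⊥ = ⊥.
Proof. destruct aut as (_ & _ & _ & _ & _ & _ & H & _). apply H. Qed.
Lemma t_top : t ⊤ = ⊤.
Proof. destruct aut as (_ & _ & _ & _ & _ & _ & _ & H). apply H. Qed.

Lemma t_mono x y : x ≤ y -> t x ≤ t y.
Proof. unfold le; intro H. rewrite <- t_meet, H. reflexivity. Qed.

Lemma boolean_iter j x : boolean x -> boolean (Nat.iter j t x).
Proof.
  unfold boolean; intro H. induction j as [|j IH]; simpl; [exact H|].
  rewrite <- t_neg, <- t_meet, IH. apply t_bot.
Qed.

Lemma boolean_bigmeet n x : boolean x -> boolean (bigmeet_iter A t n x).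
Proof.
  intro H. induction n as [|n IH]; simpl; [apply boolean_top|].
  apply boolean_meet; [exact IH | apply (boolean_iter (S n)), H].
Qed.

Lemma bigmeet_top n : bigmeet_iter A t n ⊤ = ⊤.
Proof.
  assert (Hiter : forall j, Nat.iter j t ⊤ = ⊤).
  { induction j as [|j IH]; simpl; [|rewrite IH; apply t_top]; reflexivity. }
  induction n as [|n IH]; [reflexivity|].
  cbn [bigmeet_iter]. rewrite IH, Hiter. apply meet_top.
Qed.

Lemma inK_boolean x : inK A t x -> boolean x.
Proof. intros [_ Hx]. rewrite Hx. apply boolean_nabla. Qed.
Lemma inK_bot : inK A t ⊥.
Proof. split; [apply t_bot | symmetry; apply nabla_boolean, boolean_bot]. Qed.
Lemma inK_top : inK A t ⊤.
Proof. split; [apply t_top | symmetry; apply nabla_boolean, boolean_top]. Qed.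

(** * The period k of t *)

Variable k : nat.
Hypothesis k_pos : 1 <= k.
Hypothesis period : forall x, Nat.iter k t x = x.

(* For an automorphism of finite period, t w ≤ w already forces t w = w. *)
Lemma fixed_of_le w : t w ≤ w -> t w = w.
Proof.
  intro H.
  assert (Hiter : forall n, Nat.iter n t w ≤ w).
  { induction n as [|n IH]; simpl; [apply le_refl|].
    eapply le_trans; [apply t_mono, IH | exact H]. }
  apply le_antisym; [exact H|].
  destruct k as [|k']; [lia|]. rewrite <- (period w) at 1. apply t_mono, Hiter.
Qed.

Lemma bigmeet_fixed b : t (bigmeet_iter A t k b) = bigmeet_iter A t k b.
Proof.
  apply fixed_of_le, bigmeet_le_iff. intros [|j] Hj; [lia|].
  change (Nat.iter (S j) t b) with (t (Nat.iter j t b)). apply t_mono.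
  destruct j as [|j].
  - apply le_trans with (Nat.iter k t b); [apply bigmeet_le; lia|].
    rewrite period. apply le_refl.
  - apply bigmeet_le. lia.
Qed.

Lemma bigmeet_triangle_inK a : inK A t (bigmeet_iter A t k (Δ a)).
Proof.
  split; [apply bigmeet_fixed|].
  symmetry. apply nabla_boolean, boolean_bigmeet, boolean_triangle.
Qed.

Lemma bigmeet_triangle_top a : bigmeet_iter A t k (Δ a) = ⊤ -> a = ⊤.
Proof.
  intro H. apply top_le_eq. eapply le_trans; [|apply triangle_le].
  rewrite <- H. rewrite <- (period (Δ a)) at 2. apply bigmeet_le. lia.
Qed.

(** * Congruences *)

Section Congruence.
Variable R : A -> A -> Prop.
Hypothesis cong : is_congruence A t R.

Lemma cong_refl x : R x x.
Proof. destruct cong as (H & _). apply H. Qed.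
Lemma cong_sym x y : R x y -> R y x.
Proof. destruct cong as (_ & H & _). apply H. Qed.
Lemma cong_trans x y z : R x y -> R y z -> R x z.
Proof. destruct cong as (_ & _ & H & _). apply H. Qed.
Lemma cong_meet x x' y y' : R x x' -> R y y' -> R (x ⊓ y) (x' ⊓ y').
Proof. destruct cong as (_ & _ & _ & H & _). apply H. Qed.
Lemma cong_join x x' y y' : R x x' -> R y y' -> R (x ⊔ y) (x' ⊔ y').
Proof. destruct cong as (_ & _ & _ & _ & H & _). apply H. Qed.
Lemma cong_neg x x' : R x x' -> R (∼ x) (∼ x').
Proof. destruct cong as (_ & _ & _ & _ & _ & H & _). apply H. Qed.
Lemma cong_star x x' : R x x' -> R (x ^*) (x' ^*).
Proof. destruct cong as (_ & _ & _ & _ & _ & _ & H & _). apply H. Qed.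
Lemma cong_t x x' : R x x' -> R (t x) (t x').
Proof. destruct cong as (_ & _ & _ & _ & _ & _ & _ & H). apply H. Qed.

Lemma cong_nabla x x' : R x x' -> R (∇ x) (∇ x').
Proof. intro; unfold nabla; auto using cong_neg, cong_meet, cong_star. Qed.
Lemma cong_triangle x x' : R x x' -> R (Δ x) (Δ x').
Proof. intro; unfold triangle; auto using cong_neg, cong_nabla. Qed.
Lemma cong_bigmeet n x x' :
  R x x' -> R (bigmeet_iter A t n x) (bigmeet_iter A t n x').
Proof.
  intro H.
  assert (Hiter : forall j, R (Nat.iter j t x) (Nat.iter j t x')).
  { induction j; simpl; auto using cong_t. }
  induction n as [|n IH]; [apply cong_refl|].
  apply cong_meet; [exact IH | apply (Hiter (S n))].
Qed.

Lemma cong_total : R ⊥ ⊤ -> forall x y, R x y.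
Proof.
  intro H.
  assert (Hbot : forall x, R ⊥ x).
  { intro x. rewrite <- (meet_bot x). rewrite <- (meet_top x) at 2.
    apply cong_meet; auto using cong_refl. }
  intros x y. eapply cong_trans; [apply cong_sym|]; apply Hbot.
Qed.

(* A congruence identifying a ≠ b identifies some c ≠ 1 with 1.  With
   x = a ⊓ b ≡ y = a ⊔ b, take c = (∇x ⊔ ∼∇y) ⊓ (∼Δy ⊔ Δx); c = 1 would
   give ∇y ≤ ∇x and Δy ≤ Δx, hence x = y by determination. *)
Lemma cong_separates_top a b : R a b -> a <> b -> exists c, c <> ⊤ /\ R c ⊤.
Proof.
  intros Hab Hne.
  set (x := a ⊓ b). set (y := a ⊔ b).
  assert (Rxy : R x y).
  { apply cong_trans with (b ⊓ b); [apply cong_meet; auto using cong_refl|].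
    rewrite meet_idem, <- (join_meet_absorb b b), meet_idem at 1.
    apply cong_join; auto using cong_refl, cong_sym. }
  assert (Hxy : x ≤ y).
  { apply le_trans with a; [apply meet_lb_l | apply join_ub_l]. }
  exists ((∇ x ⊔ ∼ ∇ y) ⊓ (∼ Δ y ⊔ Δ x)). split.
  - intro Hc. apply meet_eq_top in Hc as [Hn Ht].
    apply Hne, meet_eq_join, le_antisym; [exact Hxy|].
    apply determination; [exact Hxy| |].
    + apply boolean_le; [apply boolean_nabla | exact Hn].
    + apply boolean_le; [apply boolean_triangle|]. rewrite join_comm. exact Ht.
  - rewrite <- (meet_top ⊤). apply cong_meet.
    + rewrite <- (boolean_join_neg (∇ y)) by apply boolean_nabla.
      apply cong_join; [apply cong_nabla, Rxy | apply cong_refl].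
    + rewrite <- (boolean_join_neg (Δ y)) by apply boolean_triangle.
      rewrite join_comm. apply cong_join; [apply cong_triangle, Rxy | apply cong_refl].
Qed.
End Congruence.

Definition meet_cong (x u v : A) : Prop := u ⊓ x = v ⊓ x.

Lemma meet_cong_congruence x : inK A t x -> is_congruence A t (meet_cong x).
Proof.
  intros Hx. pose proof (inK_boolean x Hx) as Hbool. destruct Hx as [Htx _].
  unfold meet_cong; repeat split.
  - intros u v H. congruence.
  - intros u v w H1 H2. congruence.
  - intros u u' v v' H1 H2.
    assert (E : forall p q, p ⊓ q ⊓ x = (p ⊓ x) ⊓ (q ⊓ x)).
    { intros p q. rewrite <- (meet_idem x) at 1. rewrite !meet_assoc. f_equal.
      rewrite <- !meet_assoc. f_equal. apply meet_comm. }
    rewrite !E, H1, H2. reflexivity.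
  - intros u u' v v' H1 H2.
    rewrite !(meet_comm (_ ⊔ _)), !meet_join_distr, !(meet_comm x), H1, H2.
    reflexivity.
  - intros u u' H.
    assert (E : forall p, ∼ p ⊓ x = ∼ (p ⊓ x) ⊓ x).
    { intro p. unfold boolean in Hbool.
      rewrite neg_meet, (meet_comm (_ ⊔ _)), meet_join_distr, Hbool, join_bot.
      apply meet_comm. }
    rewrite E, H, <- E. reflexivity.
  - intros u u' H. rewrite <- star_meet_rel, H, star_meet_rel. reflexivity.
  - intros u u' H. rewrite <- Htx, <- !t_meet, H. reflexivity.
Qed.

Lemma simple_of_bigmeet :
  nontrivial A ->
  (forall a, a <> ⊤ -> bigmeet_iter A t k (Δ a) = ⊥) -> simple A t.
Proof.
  intros Hnt Hbig. split; [exact Hnt|]. intros R HR.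
  destruct (classic (forall x y, R x y -> x = y)) as [Hid|Hnid]; [left; exact Hid|].
  right. apply (cong_total R HR).
  apply not_all_ex_not in Hnid as [a Hnid]. apply not_all_ex_not in Hnid as [b Hnid].
  apply imply_to_and in Hnid as [Hab Hne].
  destruct (cong_separates_top R HR a b Hab Hne) as [c [Hc Rc]].
  rewrite <- (Hbig c Hc), <- (bigmeet_top k), <- triangle_top.
  apply cong_bigmeet, cong_triangle; assumption.
Qed.

Lemma bigmeet_of_K :
  (forall x, inK A t x <-> (x = ⊥ \/ x = ⊤)) ->
  forall a, a <> ⊤ -> bigmeet_iter A t k (Δ a) = ⊥.
Proof.
  intros HK a Ha.
  destruct (proj1 (HK _) (bigmeet_triangle_inK a)) as [E|E]; [exact E|].
  exfalso. apply Ha, bigmeet_triangle_top, E.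
Qed.

Lemma K_of_simple : simple A t -> forall x, inK A t x <-> (x = ⊥ \/ x = ⊤).
Proof.
  intros [_ Hsimple] x. split; [|intros [-> | ->]; auto using inK_bot, inK_top].
  intro Hx. destruct (Hsimple _ (meet_cong_congruence x Hx)) as [Hid|Htotal].
  - right. apply Hid. unfold meet_cong. rewrite meet_idem, meet_top_l. reflexivity.
  - left. specialize (Htotal ⊥ ⊤). unfold meet_cong in Htotal.
    rewrite meet_comm, meet_bot, meet_top_l in Htotal. auto.
Qed.

End MpMAlgebra.

Theorem theorem4p5 (k : nat) (A : mpM_sig) (t : A -> A) :
  1 <= k -> is_Ck A k t -> nontrivial A ->
  (simple A t <->
     (forall a : A, a <> one A ->
        bigmeet_iter A t k (triangle A a) = zero A)) /\
  (simple A t <->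
     (forall x : A, inK A t x <-> (x = zero A \/ x = one A))).
Proof.
  intros Hk [[[Hbdl [Hinvol Hnegjoin]] [Hpseudo Hax]] [Haut Hperiod]] Hnt.
  pose proof (K_of_simple A Hbdl Hinvol Hnegjoin Hpseudo Hax t Haut) as i_iii.
  pose proof (bigmeet_of_K A Hbdl Hinvol Hnegjoin Hpseudo Hax t Haut k Hk Hperiod)
    as iii_ii.
  pose proof (simple_of_bigmeet A Hbdl Hinvol Hnegjoin Hpseudo Hax t Haut k Hnt)
    as ii_i.
  split; split; auto.
Qed.
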